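(* For a set with apartness $X$, let $F(X)=X^*$ be the set of finite nonempty words $x_1\cdots x_m$ over $X$ (with componentwise equality), with apartness $x_1\cdots x_m\#y_1\cdots y_n$ iff $m\ne n$ or ($m=n$ and $\exists i\le m\; x_i\#y_i$), and multiplication given by concatenation; for a strongly extensional map $f:X\to Y$ let $F(f):F(X)\to F(Y)$ be $x_1\cdots x_m\mapsto f(x_1)\cdots f(x_m)$. Then $F$ is a functor from the category $\mathbf{Set}^{\#}$ of sets with apartness and strongly extensional maps to the category $\mathbf{Sg}^{\#}$ of semigroups with apartness and strongly extensional homomorphisms, and $F$ is left adjoint to the forgetful functor $V:\mathbf{Sg}^{\#}\to\mathbf{Set}^{\#}$. In particular, for every semigroup with apartness $S$ and every strongly extensional function $f:X\to S$ there is a unique strongly extensional homomorphism $\phi:F(X)\to S$ with $f=\phi\iota_X$, where $\iota_X:X\to F(X)$ is the inclusion of one-letter words.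
   Context: Constructive (intuitionistic) mathematics. An apartness relation $\#$ is irreflexive, symmetric and cotransitive ($x\#z\Rightarrow(x\#y\vee y\#z)$). A function $f$ between sets with apartness is strongly extensional if $f(x)\#f(y)\Rightarrow x\#y$. A semigroup with apartness is a semigroup with an apartness relation for which multiplication is strongly extensional: $xy\#zw\Rightarrow(x\#z\vee y\#w)$. *)

From Stdlib Require Import List Arith.
Import ListNotations.
Set Implicit Arguments.

Definition is_apartness (A : Type) (R : A -> A -> Prop) : Prop :=
  (forall x, ~ R x x) /\
  (forall x y, R x y -> R y x) /\
  (forall x y z, R x z -> R x y \/ R y z).

Definition strext (A B : Type) (apA : A -> A -> Prop) (apB : B -> B -> Prop)
  (f : A -> B) : Prop :=
  forall x y, apB (f x) (f y) -> apA x y.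

(* Objects of Set^# (equality is Leibniz equality of the carrier) *)
Record ApSet := {
  carrier :> Type;
  ap : carrier -> carrier -> Prop;
  ap_irrefl : forall x, ~ ap x x;
  ap_sym : forall x y, ap x y -> ap y x;
  ap_cotrans : forall x y z, ap x z -> ap x y \/ ap y z
}.
Arguments ap {_}.

Record ApSg := {
  sg_set :> ApSet;
  sg_mul : sg_set -> sg_set -> sg_set;
  sg_assoc : forall x y z, sg_mul x (sg_mul y z) = sg_mul (sg_mul x y) z;
  sg_mul_strext : forall x y z w,
      ap (sg_mul x y) (sg_mul z w) -> ap x z \/ ap y w
}.
Arguments sg_mul {_}.

Definition is_hom (A B : Type) (mA : A -> A -> A) (mB : B -> B -> B) (f : A -> B) :=
  forall x y, f (mA x y) = mB (f x) (f y).

(* Finite nonempty words x_1 ... x_m over X, encoded as (x_1, [x_2; ...; x_m]);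
   equality of words is (Leibniz) componentwise equality. *)
Definition word (X : Type) : Type := (X * list X)%type.

Definition letters (X : Type) (u : word X) : list X := fst u :: snd u.

Definition word_ap (X : ApSet) (u v : word X) : Prop :=
  length (letters u) <> length (letters v) \/
  (length (letters u) = length (letters v) /\
   exists i, i < length (letters u) /\
     ap (nth i (letters u) (fst u)) (nth i (letters v) (fst v))).

Definition word_mul (X : Type) (u v : word X) : word X :=
  (fst u, snd u ++ letters v).

Definition iota (X : Type) (x : X) : word X := (x, []).

Definition word_map (X Y : Type) (f : X -> Y) (u : word X) : word Y :=
  (f (fst u), map f (snd u)).
Arguments word_ap {X} u v.
Arguments word_mul {X} u v.
Arguments iota {X} x.

From Stdlib Require Import List Arith Lia.
Import ListNotations.

(* The index-based apartness [word_ap] of words is equivalent to the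
   structurally recursive apartness [lap] of their letter lists (different
   lengths, apart heads, or apart tails).  As the letters of a product
   are the concatenation of the letters, F(X) is a semigroup with apartness
   and F(f) a strongly extensional homomorphism.  For the universal
   property, f : X -> S extends to [word_ext f] : x_1...x_m |-> f(x_1)...f(x_m),
   a homomorphism by associativity in S, strongly extensional since f and the
   multiplication of S are, and unique because every word is iota x_1 times
   a shorter word. *)

Section ListApartness.

Context {X : ApSet}.

Fixpoint lap (l m : list X) : Prop :=
  match l, m with
  | [], [] => False
  | x :: l', y :: m' => ap x y \/ lap l' m'
  | _, _ => True
  end.

Lemma lap_iff (l m : list X) (d e : X) :
  lap l m <-> (length l <> length m \/ (length l = length m /\
    exists i, i < length l /\ ap (nth i l d) (nth i m e))).
Proof.
  revert m; induction l as [|x l IH]; intros [|y m]; simpl.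
  - split; [tauto|]. intros [H|[_ [i [Hi _]]]]; [now apply H|lia].
  - split; [intros _; left; discriminate|tauto].
  - split; [intros _; left; discriminate|tauto].
  - rewrite IH. split.
    + intros [Hxy|[Hlen|[Hlen [i [Hi Hap]]]]].
      * destruct (Nat.eq_dec (length l) (length m)) as [Hlen|Hlen].
        -- right; split; [now rewrite Hlen|]. exists 0; split; [lia|exact Hxy].
        -- left; intro E; apply Hlen; now injection E.
      * left; intro E; apply Hlen; now injection E.
      * right; split; [now rewrite Hlen|]. exists (S i); split; [lia|exact Hap].
    + intros [Hlen|[Hlen [[|i] [Hi Hap]]]].
      * right; left; intro E; apply Hlen; now rewrite E.
      * now left.
      * right; right; split; [lia|]. exists i; split; [lia|exact Hap].
Qed.

Lemma lap_irrefl (l : list X) : ~ lap l l.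
Proof.
  induction l as [|x l IH]; simpl; [tauto|].
  intros [H|H]; [exact (ap_irrefl _ _ H)|exact (IH H)].
Qed.

Lemma lap_sym (l m : list X) : lap l m -> lap m l.
Proof.
  revert m; induction l as [|x l IH]; intros [|y m]; simpl; try tauto.
  intros [H|H]; [left; now apply ap_sym|right; now apply IH].
Qed.

Lemma lap_cotrans (l m n : list X) : lap l n -> lap l m \/ lap m n.
Proof.
  revert m n; induction l as [|x l IH]; intros [|y m] [|z n]; simpl; try tauto.
  intros [H|H].
  - destruct (ap_cotrans _ _ y _ H); tauto.
  - destruct (IH m n H); tauto.
Qed.

Lemma lap_app (l1 l2 m1 m2 : list X) :
  lap (l1 ++ l2) (m1 ++ m2) -> lap l1 m1 \/ lap l2 m2.
Proof.
  revert m1; induction l1 as [|x l IH]; intros [|y m]; simpl; try tauto.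
  intros [H|H]; [tauto|]. destruct (IH m H); tauto.
Qed.

End ListApartness.

Lemma lap_map {X Y : ApSet} (f : X -> Y) :
  strext ap ap f -> forall l m, lap (map f l) (map f m) -> lap l m.
Proof.
  intros Hf l; induction l as [|x l IH]; intros [|y m]; simpl; try tauto.
  intros [H|H]; [left; now apply Hf|right; now apply IH].
Qed.

Section FreeSemigroup.

Context {X : ApSet}.

Lemma word_ap_lap (u v : word X) : word_ap u v <-> lap (letters u) (letters v).
Proof. unfold word_ap. rewrite (lap_iff (letters u) (letters v) (fst u) (fst v)). tauto. Qed.

Lemma letters_word_mul (u v : word X) :
  letters (word_mul u v) = letters u ++ letters v.
Proof. reflexivity. Qed.

Lemma word_ap_is_apartness : is_apartness (@word_ap X).
Proof.
  split; [|split].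
  - intros u H. apply word_ap_lap in H. exact (lap_irrefl _ H).
  - intros u v H. apply word_ap_lap, lap_sym, word_ap_lap, H.
  - intros u v w H. apply word_ap_lap in H.
    destruct (lap_cotrans _ (letters v) _ H); [left|right]; now apply word_ap_lap.
Qed.

Lemma word_mul_assoc (u v w : word X) :
  word_mul u (word_mul v w) = word_mul (word_mul u v) w.
Proof.
  destruct u as [a l]; unfold word_mul; simpl. now rewrite <- app_assoc.
Qed.

Lemma word_mul_strext (u v u' v' : word X) :
  word_ap (word_mul u v) (word_mul u' v') -> word_ap u u' \/ word_ap v v'.
Proof.
  rewrite !word_ap_lap, !letters_word_mul. apply lap_app.
Qed.

Lemma iota_strext : strext ap (@word_ap X) (@iota X).
Proof. intros x y H. apply word_ap_lap in H. simpl in H. tauto. Qed.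

End FreeSemigroup.

Section WordMap.

Context {X Y : ApSet} (f : X -> Y).

Lemma letters_word_map (u : word X) : letters (word_map f u) = map f (letters u).
Proof. reflexivity. Qed.

Lemma word_map_strext : strext ap ap f -> strext (@word_ap X) (@word_ap Y) (word_map f).
Proof.
  intros Hf u v H. rewrite word_ap_lap, !letters_word_map in H.
  apply word_ap_lap. exact (lap_map f Hf _ _ H).
Qed.

Lemma word_map_hom : is_hom (@word_mul X) (@word_mul Y) (word_map f).
Proof.
  intros [a l] v. unfold word_map, word_mul; simpl. now rewrite map_app.
Qed.

End WordMap.

Lemma word_map_id (X : Type) (u : word X) : word_map (fun x : X => x) u = u.
Proof. destruct u as [a l]. unfold word_map; simpl. now rewrite map_id. Qed.

Lemma word_map_comp (X Y Z : Type) (f : X -> Y) (g : Y -> Z) (u : word X) :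
  word_map (fun x => g (f x)) u = word_map g (word_map f u).
Proof. destruct u as [a l]. unfold word_map; simpl. now rewrite map_map. Qed.

Section Extension.

Context {X : ApSet} {S : ApSg} (f : X -> S).

Fixpoint list_ext (x : X) (l : list X) : S :=
  match l with
  | [] => f x
  | y :: l' => sg_mul (f x) (list_ext y l')
  end.

Definition word_ext (u : word X) : S := list_ext (fst u) (snd u).

Lemma word_ext_iota (x : X) : word_ext (iota x) = f x.
Proof. reflexivity. Qed.

Lemma list_ext_app (l : list X) :
  forall x y m, list_ext x (l ++ y :: m) = sg_mul (list_ext x l) (list_ext y m).
Proof.
  induction l as [|z l IH]; intros x y m; simpl; [reflexivity|].
  rewrite IH. apply sg_assoc.
Qed.

Lemma word_ext_hom : is_hom (@word_mul X) sg_mul word_ext.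
Proof. intros [a l] [b m]. apply list_ext_app. Qed.

Lemma list_ext_strext :
  strext ap ap f ->
  forall l x m y, ap (list_ext x l) (list_ext y m) -> lap (x :: l) (y :: m).
Proof.
  intros Hf l; induction l as [|a l IH]; intros x [|b m] y; simpl; try tauto.
  - intros H; left; now apply Hf.
  - intros H. destruct (sg_mul_strext _ _ _ _ _ H) as [H1|H1].
    + left; now apply Hf.
    + right; now apply IH.
Qed.

Lemma word_ext_strext : strext ap ap f -> strext (@word_ap X) ap word_ext.
Proof.
  intros Hf [a l] [b m] H. apply word_ap_lap. exact (list_ext_strext Hf l a m b H).
Qed.

(* Every word x_1 x_2 ... x_m is iota x_1 times x_2 ... x_m, so a
   homomorphism is determined by its values on one-letter words. *)
Lemma word_ext_unique (psi : word X -> S) :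
  is_hom (@word_mul X) sg_mul psi -> (forall x, psi (iota x) = f x) ->
  forall u, psi u = word_ext u.
Proof.
  intros Hhom Hiota [a l]; unfold word_ext; simpl.
  revert a; induction l as [|b l IH]; intros a; [apply Hiota|].
  change (a, b :: l) with (word_mul (iota a) (b, l)).
  rewrite Hhom, Hiota, IH. reflexivity.
Qed.

End Extension.

Theorem mainTheorem8 :
  (* F(X) is a semigroup with apartness *)
  (forall X : ApSet,
     is_apartness (@word_ap X) /\
     (forall u v w : word X,
        word_mul u (word_mul v w) = word_mul (word_mul u v) w) /\
     (forall u v u' v' : word X,
        word_ap (word_mul u v) (word_mul u' v') -> word_ap u u' \/ word_ap v v')) /\
  (* F on morphisms: strongly extensional homomorphisms *)
  (forall (X Y : ApSet) (f : X -> Y),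
     strext ap ap f ->
     strext (@word_ap X) (@word_ap Y) (word_map f) /\
     is_hom (@word_mul X) (@word_mul Y) (word_map f)) /\
  (* functoriality *)
  (forall (X : ApSet) (u : word X), word_map (fun x : X => x) u = u) /\
  (forall (X Y Z : ApSet) (f : X -> Y) (g : Y -> Z) (u : word X),
     word_map (fun x => g (f x)) u = word_map g (word_map f u)) /\
  (* the unit iota is a natural family of strongly extensional maps *)
  (forall X : ApSet, strext ap (@word_ap X) (@iota X)) /\
  (forall (X Y : ApSet) (f : X -> Y) (x : X),
     word_map f (iota x) = iota (f x)) /\
  (* universal property of iota (F is left adjoint to the forgetful V) *)
  (forall (X : ApSet) (S : ApSg) (f : X -> S),
     strext ap ap f ->
     exists phi : word X -> S,
       strext (@word_ap X) ap phi /\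
       is_hom (@word_mul X) sg_mul phi /\
       (forall x, phi (iota x) = f x) /\
       (forall psi : word X -> S,
          strext (@word_ap X) ap psi ->
          is_hom (@word_mul X) sg_mul psi ->
          (forall x, psi (iota x) = f x) ->
          forall u, psi u = phi u)).
Proof.
  split; [|split; [|split; [|split; [|split; [|split]]]]].
  - intros X. split; [apply word_ap_is_apartness|].
    split; [apply word_mul_assoc|apply word_mul_strext].
  - intros X Y f Hf. split; [exact (word_map_strext f Hf)|apply word_map_hom].
  - intros X u. apply word_map_id.
  - intros X Y Z f g u. apply word_map_comp.
  - intros X. apply iota_strext.
  - reflexivity.
  - intros X S f Hf. exists (word_ext f).
    split; [exact (word_ext_strext f Hf)|].
    split; [apply word_ext_hom|].
    split; [apply word_ext_iota|].
    intros psi _ Hhom Hiota. exact (word_ext_unique f psi Hhom Hiota).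
Qed.
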